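(* Fix $n\in\mathbb{N}$. If $0<U\le \frac{T}{\ln^2T}$ and $T$ is sufficiently large, then $$0<\varphi_1^k(T+U)-\varphi_1^k(T)<\frac{2k+1}{2n+1}\,\frac{T}{\ln T}\le\frac{T}{\ln T},\qquad k=1,\dots,n.$$
   Context: A Jacob's ladder is a function $\varphi_1(t)=\frac12\varphi(t)$, where $y=\varphi(T)$ is an arbitrary solution of the nonlinear integral equation $\int_0^{\mu[x(T)]}Z^2(t)e^{-\frac{2}{x(T)}t}\,{\rm d}t=\int_0^T Z^2(t)\,{\rm d}t$, with $Z(t)=e^{i\vartheta(t)}\zeta(\frac12+it)$, $\vartheta(t)=-\frac t2\ln\pi+\operatorname{Im}\ln\Gamma(\frac14+i\frac t2)$, $\mu(y)\ge 7y\ln y$. It is known that $\varphi_1$ is increasing for $t\ge T_0[\varphi_1]$ and satisfies $t-\varphi_1(t)\sim(1-c)\frac{t}{\ln t}$ as $t\to\infty$, where $c$ is Euler's constant. Iterates: $\varphi_1^0(t)=t$, $\varphi_1^{k+1}(t)=\varphi_1(\varphi_1^k(t))$. *)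

From Stdlib Require Import Reals Lra Lia.
Open Scope R_scope.

Fixpoint iterf (k : nat) (f : R -> R) (t : R) : R :=
  match k with
  | O => t
  | S k' => f (iterf k' f t)
  end.

Fixpoint harmonic (n : nat) : R :=
  match n with
  | O => 0
  | S m => harmonic m + / INR (S m)
  end.

Definition is_euler_constant (c : R) : Prop :=
  Un_cv (fun n => harmonic n - ln (INR n)) c.

Definition lim_at_infty (f : R -> R) (l : R) : Prop :=
  forall eps : R, eps > 0 ->
    exists M : R, forall t : R, t >= M -> Rabs (f t - l) < eps.

(* The known properties of a Jacob's ladder phi1 used as hypotheses:
   phi1 is (strictly) increasing for t >= T0, and
   t - phi1 t ~ (1 - c) t / ln t as t -> infinity. *)
Definition jacob_ladder_props (c : R) (phi1 : R -> R) : Prop :=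
  (exists T0 : R, forall s t : R, T0 <= s -> s < t -> phi1 s < phi1 t) /\
  lim_at_infty (fun t => (t - phi1 t) / ((1 - c) * t / ln t)) 1.

(* Write a = 1 - c > 0 (Euler's constant is < 1, since H_n - ln n decreases
   from H_2 - ln 2 < 1).  The asymptotics t - phi1 t ~ a t / ln t give, for
   every d > 0 and all large t, the deficit bounds
       (1 - d) a t/ln t <= t - phi1 t <= (1 + d) a t/ln t.
   Since t/ln t is nondecreasing, these imply two local facts for large t:
   phi1 t lies in [t/2, t], and phi1 (t + u) - phi1 t <= u + 2 a d t/ln t.
   Iterating n times from T >= 2^n M keeps every iterate above M, and the
   increments add up to  phi1^k(T+U) - phi1^k(T) <= U + k eta T/ln T  with
   eta = 2 a d; positivity comes from the monotonicity of phi1.  Choosing d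
   so that eta (2n+1) <= 1, and T so large that U (2n+1) < T/ln T whenever
   U <= T/ln^2 T, yields the bound (2k+1)/(2n+1) T/ln T. *)

From Stdlib Require Import Reals Lra Lia.
Open Scope R_scope.

Lemma ln_le_sub1 z : 0 < z -> ln z <= z - 1.
Proof.
  intros Hz. pose proof (exp_ineq1_le (ln z)) as H.
  rewrite exp_ln in H by lra. lra.
Qed.

Lemma ln_le x y : 0 < x -> x <= y -> ln x <= ln y.
Proof.
  intros Hx Hxy. destruct (Rle_lt_or_eq_dec _ _ Hxy) as [H | ->].
  - left; apply ln_increasing; lra.
  - lra.
Qed.

Lemma exp_le x y : x <= y -> exp x <= exp y.
Proof.
  intros Hxy. destruct (Rle_lt_or_eq_dec _ _ Hxy) as [H | ->].
  - left; apply exp_increasing; lra.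
  - lra.
Qed.

Lemma ln_ge_of_exp_le b t : exp b <= t -> b <= ln t.
Proof. intros H. rewrite <- (ln_exp b). apply ln_le; [apply exp_pos | lra]. Qed.

Lemma x_over_ln_le x y : 0 < x -> 1 <= ln x -> x <= y -> x / ln x <= y / ln y.
Proof.
  intros Hx Hl Hxy.
  assert (Hly : ln x <= ln y) by (apply ln_le; lra).
  assert (Hsplit : ln y = ln x + ln (y / x)).
  { rewrite <- ln_mult by (try apply Rdiv_lt_0_compat; lra). f_equal. field. lra. }
  assert (Hratio : ln (y / x) <= y / x - 1)
    by (apply ln_le_sub1; apply Rdiv_lt_0_compat; lra).
  assert (Hcross : x * ln y <= y * ln x).
  { rewrite Hsplit.
    assert (x * ln (y / x) <= y - x).
    { replace (y - x) with (x * (y / x - 1)) by (field; lra).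
      apply Rmult_le_compat_l; lra. }
    nra. }
  apply (Rmult_le_reg_r (ln x * ln y)); [nra |].
  replace (x / ln x * (ln x * ln y)) with (x * ln y) by (field; lra).
  replace (y / ln y * (ln x * ln y)) with (y * ln x) by (field; lra).
  lra.
Qed.

Lemma harmonic_minus_ln_step n : (1 <= n)%nat ->
  harmonic (S n) - ln (INR (S n)) <= harmonic n - ln (INR n).
Proof.
  intros Hn. change (harmonic (S n)) with (harmonic n + / INR (S n)).
  assert (H1 : 1 <= INR n) by (apply (le_INR 1); lia).
  rewrite S_INR.
  assert (Hsplit : ln (INR n) = ln (INR n + 1) + ln (INR n / (INR n + 1))).
  { rewrite <- ln_mult by (try apply Rdiv_lt_0_compat; lra). f_equal. field. lra. }
  assert (Hb : ln (INR n / (INR n + 1)) <= INR n / (INR n + 1) - 1)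
    by (apply ln_le_sub1; apply Rdiv_lt_0_compat; lra).
  replace (INR n / (INR n + 1) - 1) with (- / (INR n + 1)) in Hb by (field; lra).
  lra.
Qed.

Lemma harmonic_minus_ln_le_2 m :
  harmonic (m + 2) - ln (INR (m + 2)) <= harmonic 2 - ln (INR 2).
Proof.
  induction m as [| m IH]; [simpl; lra |].
  replace (S m + 2)%nat with (S (m + 2)) by lia.
  eapply Rle_trans; [apply harmonic_minus_ln_step; lia | exact IH].
Qed.

(* Euler's constant is below 1 (indeed below H_2 - ln 2 = 3/2 - ln 2),
   so the ladder deficit (1 - c) t / ln t is positive. *)
Lemma euler_constant_lt_1 c : is_euler_constant c -> c < 1.
Proof.
  intros Hc.
  assert (H2 : harmonic 2 - ln (INR 2) < 1).
  { pose proof ln_lt_2. simpl. replace (1 + 1) with 2 by lra. lra. }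
  destruct (Rlt_or_le c 1) as [Hlt | Hge]; [exact Hlt | exfalso].
  destruct (Hc (c - (harmonic 2 - ln (INR 2)))) as [N HN]; [lra |].
  specialize (HN (N + 2)%nat ltac:(lia)). unfold R_dist in HN.
  pose proof (harmonic_minus_ln_le_2 N). apply Rabs_def2 in HN. lra.
Qed.

Lemma ladder_deficit_eventually c phi1 :
  c < 1 -> jacob_ladder_props c phi1 ->
  forall d b, 0 < d ->
  exists M, exp b <= M /\
    (forall s t, M <= s -> s < t -> phi1 s < phi1 t) /\
    (forall t, M <= t ->
       (1 - d) * ((1 - c) * (t / ln t)) <= t - phi1 t <=
       (1 + d) * ((1 - c) * (t / ln t))).
Proof.
  intros Hc [[T0 Hmono] Hlim] d b Hd.
  destruct (Hlim d Hd) as [M1 HM1].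
  set (M := Rmax (Rmax M1 T0) (Rmax (exp b) (exp 1))).
  assert (HM1M : M1 <= M) by (unfold M; eapply Rle_trans; [apply Rmax_l | apply Rmax_l]).
  assert (HT0M : T0 <= M) by (unfold M; eapply Rle_trans; [apply Rmax_r | apply Rmax_l]).
  assert (HbM : exp b <= M) by (unfold M; eapply Rle_trans; [apply Rmax_l | apply Rmax_r]).
  assert (HeM : exp 1 <= M) by (unfold M; eapply Rle_trans; [apply Rmax_r | apply Rmax_r]).
  exists M. split; [exact HbM | split].
  - intros s t Hs Hst. apply Hmono; lra.
  - intros t Ht. pose proof (exp_pos 1).
    assert (Hl : 1 <= ln t) by (apply ln_ge_of_exp_le; lra).
    assert (Hg : 0 < (1 - c) * (t / ln t))
      by (apply Rmult_lt_0_compat; [lra | apply Rdiv_lt_0_compat; lra]).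
    specialize (HM1 t ltac:(lra)). apply Rabs_def2 in HM1.
    replace ((1 - c) * t / ln t) with ((1 - c) * (t / ln t)) in HM1
      by (unfold Rdiv; ring).
    destruct HM1 as [Hup Hlo].
    split.
    + apply (Rmult_le_reg_r (/ ((1 - c) * (t / ln t)))); [apply Rinv_0_lt_compat; lra |].
      replace ((1 - d) * ((1 - c) * (t / ln t)) * / ((1 - c) * (t / ln t)))
        with (1 - d) by (field; lra).
      unfold Rdiv in *. lra.
    + apply (Rmult_le_reg_r (/ ((1 - c) * (t / ln t)))); [apply Rinv_0_lt_compat; lra |].
      replace ((1 + d) * ((1 - c) * (t / ln t)) * / ((1 - c) * (t / ln t)))
        with (1 + d) by (field; lra).
      unfold Rdiv in *. lra.
Qed.

Section LadderStep.

Variables (phi : R -> R) (a d M : R).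
Hypothesis a_pos : 0 < a.
Hypothesis d_range : 0 < d <= / 2.
Hypothesis M_large : exp (3 * a + 1) <= M.
Hypothesis deficit : forall t, M <= t ->
  (1 - d) * (a * (t / ln t)) <= t - phi t <= (1 + d) * (a * (t / ln t)).

Let ln_large t : M <= t -> 3 * a + 1 <= ln t.
Proof. intros Ht. apply ln_ge_of_exp_le. lra. Qed.

Let t_gt1 t : M <= t -> 1 < t.
Proof. intros Ht. pose proof (exp_ineq1_le (3 * a + 1)). lra. Qed.

Lemma ladder_step_range t : M <= t -> t / 2 <= phi t <= t.
Proof.
  intros Ht. pose proof (ln_large t Ht). pose proof (t_gt1 t Ht).
  pose proof (deficit t Ht) as [Hlo Hhi].
  assert (HL : 0 < t / ln t) by (apply Rdiv_lt_0_compat; lra).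
  assert (Hback : t / ln t * ln t = t) by (field; lra).
  assert (a * (t / ln t) * 3 <= t) by nra.
  assert (0 <= (1 - d) * (a * (t / ln t))) by (apply Rmult_le_pos; nra).
  assert ((1 + d) * (a * (t / ln t)) <= 3 / 2 * (a * (t / ln t))) by nra.
  lra.
Qed.

Lemma ladder_step_gap t u : M <= t -> 0 <= u ->
  phi (t + u) - phi t <= u + 2 * a * d * (t / ln t).
Proof.
  intros Ht Hu. pose proof (ln_large t Ht). pose proof (t_gt1 t Ht).
  pose proof (deficit t Ht) as [_ Hhi].
  pose proof (deficit (t + u) ltac:(lra)) as [Hlo _].
  assert (Hscale : t / ln t <= (t + u) / ln (t + u)) by (apply x_over_ln_le; lra).
  assert ((1 - d) * (a * (t / ln t)) <= (1 - d) * (a * ((t + u) / ln (t + u)))).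
  { apply Rmult_le_compat_l; [lra |]. apply Rmult_le_compat_l; lra. }
  lra.
Qed.

End LadderStep.

Section Iteration.

Variables (phi : R -> R) (M eta : R).
Hypothesis eta_nonneg : 0 <= eta.
Hypothesis M_large : exp 1 <= M.
Hypothesis increasing : forall s t, M <= s -> s < t -> phi s < phi t.
Hypothesis step_range : forall t, M <= t -> t / 2 <= phi t <= t.
Hypothesis step_gap : forall t u, M <= t -> 0 <= u ->
  phi (t + u) - phi t <= u + eta * (t / ln t).

Lemma iterate_gap n T U : 2 ^ n * M <= T -> 0 < U ->
  forall j, (j <= n)%nat ->
    T / 2 ^ j <= iterf j phi T <= T /\
    0 < iterf j phi (T + U) - iterf j phi T <=
        U + INR j * eta * (T / ln T).
Proof.
  intros HT HU.
  assert (HM1 : 1 <= ln M) by (apply ln_ge_of_exp_le; lra).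
  assert (HMpos : 0 < M) by (pose proof (exp_pos 1); lra).
  induction j as [| j IH]; intros Hj.
  - simpl. split; lra.
  - destruct (IH ltac:(lia)) as [[Hlow Hhigh] [Hgap0 Hgap]].
    set (t := iterf j phi T) in *. set (s := iterf j phi (T + U)) in *.
    change (iterf (S j) phi T) with (phi t).
    change (iterf (S j) phi (T + U)) with (phi s).
    assert (H2j : 0 < 2 ^ j <= 2 ^ n).
    { split; [apply pow_lt; lra | apply Rle_pow; [lra | lia]]. }
    assert (HtM : M <= t).
    { assert (M <= T / 2 ^ j); [| lra].
      apply (Rmult_le_reg_r (2 ^ j)); [lra |].
      replace (T / 2 ^ j * 2 ^ j) with T by (field; lra). nra. }
    assert (Hlnt : 1 <= ln t) by (eapply Rle_trans; [exact HM1 | apply ln_le; lra]).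
    assert (Hscale : t / ln t <= T / ln T) by (apply x_over_ln_le; lra).
    pose proof (step_range t HtM) as Hrange.
    pose proof (step_gap t (s - t) HtM ltac:(lra)) as Hstep.
    replace (t + (s - t)) with s in Hstep by ring.
    split; [split | split].
    + simpl pow. replace (T / (2 * 2 ^ j)) with (T / 2 ^ j / 2) by (field; lra). lra.
    + lra.
    + assert (phi t < phi s) by (apply increasing; lra). lra.
    + rewrite S_INR. nra.
Qed.

End Iteration.

Lemma short_shift_small T U N : 0 < N -> exp (N + 1) <= T ->
  0 < U -> U <= T / (ln T) ^ 2 -> U * N < T / ln T.
Proof.
  intros HN HT HU HUb.
  assert (Hl : N + 1 <= ln T) by (apply ln_ge_of_exp_le; lra).
  assert (Hlpos : 0 < ln T) by lra.
  assert (HUl : U * ln T <= T / ln T).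
  { replace (T / ln T) with (T / ln T ^ 2 * ln T) by (field; lra).
    apply Rmult_le_compat_r; lra. }
  nra.
Qed.

Lemma gap_fraction_bound D U L eta k N : 0 < N -> 0 < L -> 0 <= k ->
  eta * N <= 1 -> U * N < L -> D <= U + k * eta * L ->
  D < (2 * k + 1) / N * L.
Proof.
  intros HN HL Hk Heta HU HD.
  apply (Rmult_lt_reg_r N); [lra |].
  replace ((2 * k + 1) / N * L * N) with ((2 * k + 1) * L) by (field; lra).
  assert (k * L * (eta * N) <= k * L) by (assert (0 <= k * L) by nra; nra).
  nra.
Qed.

Lemma fraction_le_whole k n L : 0 <= L -> 0 <= k <= n ->
  (2 * k + 1) / (2 * n + 1) * L <= L.
Proof.
  intros HL Hk.
  assert (Hr : (2 * k + 1) / (2 * n + 1) <= 1).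
  { apply (Rmult_le_reg_r (2 * n + 1)); [lra |].
    replace ((2 * k + 1) / (2 * n + 1) * (2 * n + 1)) with (2 * k + 1) by (field; lra).
    lra. }
  nra.
Qed.

Theorem mainTheorem4 :
  forall (c : R) (phi1 : R -> R),
    is_euler_constant c ->
    jacob_ladder_props c phi1 ->
    forall n : nat,
      exists T1 : R,
        forall T U : R,
          T >= T1 ->
          0 < U -> U <= T / (ln T) ^ 2 ->
          forall k : nat, (1 <= k <= n)%nat ->
            0 < iterf k phi1 (T + U) - iterf k phi1 T /\
            iterf k phi1 (T + U) - iterf k phi1 T
              < (2 * INR k + 1) / (2 * INR n + 1) * (T / ln T) /\
            (2 * INR k + 1) / (2 * INR n + 1) * (T / ln T) <= T / ln T.
Proof.
  intros c phi1 Hc Hladder n.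
  pose proof (euler_constant_lt_1 c Hc) as Hc1.
  set (a := 1 - c). set (N := 2 * INR n + 1).
  assert (Ha : 0 < a) by (unfold a; lra).
  assert (HN : 1 <= N) by (unfold N; pose proof (pos_INR n); lra).
  (* d is chosen so that the per-step error eta = 2 a d satisfies eta N <= 1 *)
  set (d := / (2 * (a + 1) * N)).
  assert (Hd : 0 < d <= / 2).
  { unfold d. split; [apply Rinv_0_lt_compat; nra | apply Rinv_le_contravar; nra]. }
  assert (Heta : 2 * a * d * N <= 1).
  { unfold d. replace (2 * a * / (2 * (a + 1) * N) * N) with (a / (a + 1)) by (field; lra).
    apply (Rmult_le_reg_r (a + 1)); [lra |].
    replace (a / (a + 1) * (a + 1)) with a by (field; lra). lra. }
  destruct (ladder_deficit_eventually c phi1 Hc1 Hladder d (3 * a + 1) ltac:(lra))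
    as [M [HM [Hmono Hdeficit]]].
  assert (HM1 : exp 1 <= M) by (eapply Rle_trans; [apply exp_le | exact HM]; lra).
  exists (Rmax (2 ^ n * M) (exp (N + 1))).
  intros T U HT HU HUb k Hk.
  pose proof (Rmax_l (2 ^ n * M) (exp (N + 1))) as HTM.
  pose proof (Rmax_r (2 ^ n * M) (exp (N + 1))) as HTe.
  destruct (iterate_gap phi1 M (2 * a * d) ltac:(nra) HM1 Hmono
              (ladder_step_range phi1 a d M Ha Hd HM Hdeficit)
              (ladder_step_gap phi1 a d M Ha Hd HM Hdeficit)
              n T U ltac:(lra) HU k ltac:(lia)) as [_ [Hpos Hgap]].
  assert (Hk0 : 0 <= INR k <= INR n) by (split; [apply pos_INR | apply le_INR; lia]).
  assert (HlnT : 0 < ln T) by (pose proof (ln_ge_of_exp_le (N + 1) T ltac:(lra)); lra).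
  assert (HL : 0 < T / ln T)
    by (apply Rdiv_lt_0_compat; [pose proof (exp_pos (N + 1)) |]; lra).
  split; [exact Hpos | split].
  - apply (gap_fraction_bound _ U _ (2 * a * d)); try lra.
    apply (short_shift_small T U N); lra.
  - apply fraction_le_whole; lra.
Qed.
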